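(* In an environment with incentivizing factor $\epsilon\ge0$, an adversarial pool with share $\alpha_\mathcal{A}$ obtains strictly larger time-averaged profit than honest mining by conducting the whale-transaction bribery attack (normalized bribes $\mathrm{br}_1=\frac{\alpha_i+\epsilon}{1-\alpha_i}$, $\mathrm{br}_2=\epsilon$) on a target block mined by a pool with share $\alpha_i\in(0,1)$, provided $$\alpha_\mathcal{A}>\frac{\alpha_i}{1-\alpha_i}+\epsilon\Big(\frac{1}{1-\alpha_i}+1\Big).$$
   Context: Model: adversarial pool and petty-compliant pools with mining-power shares summing to $1$; fixed block reward $R$; normalized bribe $\mathrm{br}$ means payment $\mathrm{br}\cdot R$; a petty-compliant pool $p_j$ deviates from honest mining iff the alternative's expected return exceeds the honest one by at least $\epsilon\alpha_jR$. Whale-transaction bribery attack: the adversary publishes fee-carrying transactions $tx_1$ (fee $\mathrm{br}_1R$, collectible by the miner of a rival block to the target) and $tx_2$ (fee $\mathrm{br}_2R$, collectible by the miner of a block extending the rival), valid only in chains not containing the target block. Facts used: with these bribes all petty-compliant pools except the target's miner prefer to mine a rival; and in steady state after difficulty adjustment, paying normalized bribe $\mathrm{br}$ per orphaned non-adversarial block gives time-averaged profit exceeding honest profit iff $\mathrm{br}<\alpha_\mathcal{A}$. *)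

From mathcomp Require Import all_boot all_order all_algebra.
Set Implicit Arguments. Unset Strict Implicit. Unset Printing Implicit Defensive.
Import Order.TTheory GRing.Theory Num.Theory.
Local Open Scope ring_scope.

Definition whale_br1 {R : realFieldType} (ai eps : R) : R := (ai + eps) / (1 - ai).
Definition whale_br2 {R : realFieldType} (eps : R) : R := eps.

(* Total normalized bribe paid per orphaned (non-adversarial) target block:
   tx_1 (fee br1*Rw) and tx_2 (fee br2*Rw) are both collected exactly when the
   target block is orphaned. *)
Definition whale_bribe {R : realFieldType} (ai eps : R) : R :=
  whale_br1 ai eps + whale_br2 eps.

Definition honest_profit {R : realFieldType} (aA Rw : R) : R := aA * Rw.

(* Steady-state time-averaged profit, after difficulty adjustment, of an
   adversary of share [aA] that causes a fraction [f] of the non-adversarial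
   blocks to be orphaned, paying normalized bribe [br] (i.e. br*Rw) per
   orphaned non-adversarial block.  Per unit of mined blocks, the main chain
   receives 1 - f(1-aA) blocks, of which aA are adversarial; the difficulty
   adjustment restores one main-chain block per interval, so rewards and
   bribe costs are rescaled by 1/(1 - f(1-aA)). *)
Definition attack_profit {R : realFieldType} (aA f br Rw : R) : R :=
  (aA * Rw - br * Rw * (f * (1 - aA))) / (1 - f * (1 - aA)).

From mathcomp Require Import all_boot all_order all_algebra.
From mathcomp Require Import ring lra.
Import Order.TTheory GRing.Theory Num.Theory.
Local Open Scope ring_scope.

(* The threshold says exactly that the two whale bribes sum to less than [aA].
   Orphaning a non-adversarial block then costs less than the share [aA] of
   the reward that the adversary regains through the difficulty adjustment,
   so every orphaned block is a net gain. *)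

Lemma whale_bribeE (R : realFieldType) (ai eps : R) :
  whale_bribe ai eps = ai / (1 - ai) + eps * (1 / (1 - ai) + 1).
Proof.
by rewrite /whale_bribe /whale_br1 /whale_br2 mulrDl mulrDr mulr1 mul1r addrA (mulrC eps).
Qed.

Lemma attack_profitBhonest (R : realFieldType) (aA f br Rw : R) :
  1 - f * (1 - aA) != 0 ->
  attack_profit aA f br Rw - honest_profit aA Rw
    = Rw * (f * (1 - aA)) * (aA - br) / (1 - f * (1 - aA)).
Proof.
by move=> nz; rewrite /attack_profit /honest_profit; field.
Qed.

Lemma attack_profit_gt_honest (R : realFieldType) (aA f br Rw : R) :
  0 < Rw -> 0 < f <= 1 -> 0 < aA < 1 -> br < aA ->
  honest_profit aA Rw < attack_profit aA f br Rw.
Proof.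
move=> Rw_gt0 /andP[f_gt0 f_le1] /andP[aA_gt0 aA_lt1] br_lt_aA.
have lost_gt0 : 0 < f * (1 - aA) by rewrite mulr_gt0 ?subr_gt0.
have lost_lt1 : f * (1 - aA) < 1 by nra.
rewrite -subr_gt0 attack_profitBhonest ?subr_eq0 1?eq_sym ?lt_eqF //.
by rewrite divr_gt0 ?subr_gt0 // !mulr_gt0 ?subr_gt0.
Qed.

Theorem theorem4 (R : realFieldType) (Rw eps ai aA f : R) :
  0 < Rw -> 0 <= eps ->
  0 < ai < 1 -> 0 < aA -> ai + aA <= 1 ->
  0 < f <= 1 ->
  aA > ai / (1 - ai) + eps * (1 / (1 - ai) + 1) ->
  attack_profit aA f (whale_bribe ai eps) Rw > honest_profit aA Rw.
Proof.
move=> Rw_gt0 _ /andP[ai_gt0 _] aA_gt0 share_le1 f_bound threshold.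
apply: attack_profit_gt_honest => //; last by rewrite whale_bribeE.
by rewrite aA_gt0 /=; lra.
Qed.
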